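(* Let $\mathcal{M}=(E,\mathcal{I})$ be a matroid whose ground set $E$ is dependent, let $S\subseteq E$ be a dependent set, and let $T\subseteq S$. Then $$q_{S,\mathcal{M}}-q_{S\setminus T,\mathcal{M}}=\Pr_{\pi}\big[C_\pi\subseteq S \text{ and } C_\pi\cap T\neq\emptyset\big]\le p_{T,\mathcal{M}|_S},$$ where $\pi$ is a uniformly random permutation of $E$ on the left and in the middle, while $p_{T,\mathcal{M}|_S}$ is computed with respect to uniformly random permutations of $S$.
   Context: For a matroid $\mathcal{N}$ whose ground set $F$ is dependent and a permutation $\pi$ of $F$, $C_\pi$ denotes the first circuit formed when adding elements in the order of $\pi$: if the first $j$ elements of $\pi$ form an independent set but the first $j+1$ do not, $C_\pi$ is the unique circuit contained in the first $j+1$ elements. For $T\subseteq F$, the hitting probability is $p_{T,\mathcal{N}}=\Pr_\pi[C_\pi\cap T\neq\emptyset]$ and the circuit mass is $q_{T,\mathcal{N}}=\Pr_\pi[C_\pi\subseteq T]$, where $\pi$ is a uniformly random permutation of $F$. $\mathcal{M}|_S$ denotes the restriction of $\mathcal{M}$ to $S$ (independent sets are the independent sets of $\mathcal{M}$ contained in $S$). *)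

From mathcomp Require Import all_boot all_order all_algebra.
Set Implicit Arguments. Unset Strict Implicit. Unset Printing Implicit Defensive.
Import Order.TTheory GRing.Theory Num.Theory.

Record matroid (T : finType) := Matroid {
  ground : {set T};
  indep : {set T} -> bool;
  indep_sub : forall A, indep A -> A \subset ground;
  indep0 : indep set0;
  indep_hered : forall A B : {set T}, A \subset B -> indep B -> indep A;
  indep_exch : forall A B : {set T}, indep A -> indep B -> #|A| < #|B| ->
                 exists2 x, x \in B :\: A & indep (x |: A)
}.

Section Restriction.
Variables (T : finType) (M : matroid T) (S : {set T}).

Definition restr_indep (A : {set T}) : bool := indep M A && (A \subset S).

Lemma restr_indep_sub (A : {set T}) : restr_indep A -> A \subset S :&: ground M.
Proof.
by case/andP=> iA sAS; rewrite subsetI sAS (indep_sub iA).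
Qed.

Lemma restr_indep0 : restr_indep set0.
Proof. by rewrite /restr_indep indep0 sub0set. Qed.

Lemma restr_indep_hered (A B : {set T}) : A \subset B -> restr_indep B -> restr_indep A.
Proof.
move=> sAB /andP[iB sBS]; apply/andP; split.
  exact: indep_hered sAB iB.
exact: subset_trans sAB sBS.
Qed.

Lemma restr_indep_exch (A B : {set T}) : restr_indep A -> restr_indep B -> #|A| < #|B| ->
  exists2 x, x \in B :\: A & restr_indep (x |: A).
Proof.
move=> /andP[iA sAS] /andP[iB sBS] lt.
have [x xBA ixA] := indep_exch iA iB lt.
exists x => //; apply/andP; split => //.
rewrite subUset sAS andbT sub1set.
by move: xBA; rewrite inE => /andP[_ /(subsetP sBS)].
Qed.

Definition restrict : matroid T :=
  @Matroid T (S :&: ground M) restr_indep restr_indep_sub restr_indep0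
    restr_indep_hered restr_indep_exch.
End Restriction.

Section Circuits.
Variables (T : finType) (M : matroid T).

Definition circuit (C : {set T}) : bool :=
  ~~ indep M C && [forall D : {set T}, (D \proper C) ==> indep M D].

(* For an ordering s of the ground set, the shortest dependent prefix
   (as a set): the first k such that the first k elements are dependent. *)
Definition first_dep_prefix (s : seq T) : {set T} :=
  [set x in take (find (fun k => ~~ indep M [set y in take k s])
                        (iota 0 (size s).+1)) s].

(* C_pi : the (unique) circuit contained in that prefix. *)
Definition Cpi (s : seq T) : {set T} :=
  odflt set0 [pick C : {set T} | circuit C && (C \subset first_dep_prefix s)].

Definition orderings : seq (seq T) := permutations (enum (ground M)).

Definition Pr (E : pred (seq T)) : rat :=
  ((count E orderings)%:R / (size orderings)%:R)%R.

Definition hitp (A : {set T}) : rat := Pr (fun s => Cpi s :&: A != set0).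
Definition massq (A : {set T}) : rat := Pr (fun s => Cpi s \subset A).
End Circuits.

From mathcomp Require Import all_boot all_order all_algebra.
Import Order.TTheory GRing.Theory Num.Theory.
Set Implicit Arguments. Unset Strict Implicit. Unset Printing Implicit Defensive.

(* Splitting the event [C_pi \subset S] according to whether [C_pi] meets [A]
   gives the identity.  For the inequality, the [S]-subsequence of a uniformly
   random ordering of the ground set is a uniformly random ordering of [S], and
   whenever [C_pi \subset S] the first dependent prefix of that subsequence in
   [M|_S] consists of the [S]-elements of the first dependent prefix of [pi];
   hence its first circuit is [C_pi] itself. *)

Section CountPermutations.
Variable X : eqType.

Lemma count_permutations_cons (P : pred (seq X)) (s : seq X) :
  uniq s -> s != [::] ->
  count P (permutations s)
  = \sum_(x <- s) count (fun t => P (x :: t)) (permutations (rem x s)).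
Proof.
move=> s_uniq s_nil; rewrite (permP (permutationsE _)) ?lt0n ?size_eq0 //.
by rewrite count_flatten undup_id // sumnE !big_map; under eq_bigr do rewrite count_map.
Qed.

Lemma rem_filter_comm (a : pred X) (x : X) (s : seq X) :
  uniq s -> rem x (filter a s) = filter a (rem x s).
Proof.
move=> s_uniq; rewrite !rem_filter ?filter_uniq // -!filter_predI.
by apply: eq_filter => y /=; rewrite andbC.
Qed.

(* Each ordering of [filter a s] is the [a]-subsequence of exactly
   [(size s)`! / (size (filter a s))`!] orderings of [s]. *)
Lemma count_permutations_filter (a : pred X) (Q : pred (seq X)) (s : seq X) :
  uniq s ->
  count (fun t => Q (filter a t)) (permutations s) * (size (filter a s))`!
  = count Q (permutations (filter a s)) * (size s)`!.
Proof.
move size_s : (size s) => n; elim: n s Q size_s => [|n IHn] s Q; first by case: s.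
move=> size_s s_uniq; set k := size (filter a s).
set R := count Q (permutations (filter a s)).
pose h x := count (fun t => Q (x :: t)) (permutations (rem x (filter a s))).
have s_nil : s != [::] by rewrite -size_eq0 size_s.
have step x : x \in s ->
  count (fun t => Q (filter a (x :: t))) (permutations (rem x s)) * k`!
  = (if a x then k * h x else R) * n`!.
  move=> xs; have rs_uniq := rem_uniq x s_uniq.
  have size_rs : size (rem x s) = n by rewrite size_rem // size_s.
  rewrite /=; case: ifP => ax.
    have xf : x \in filter a s by rewrite mem_filter ax.
    have := IHn _ (fun t => Q (x :: t)) size_rs rs_uniq.
    rewrite -rem_filter_comm // size_rem // -/k => IHx.
    have k_gt0 : 0 < k by rewrite /k size_filter -has_count; apply/hasP; exists x.
    by rewrite -(prednK k_gt0) factS mulnCA IHx mulnA.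
  have xf : x \notin filter a s by rewrite mem_filter ax.
  by have := IHn _ Q size_rs rs_uniq; rewrite -rem_filter_comm // (rem_id xf) => ->.
have sum_h : k * \sum_(x <- s | a x) h x = k * R.
  have [k0|k_gt0] := posnP k; first by rewrite k0.
  rewrite -big_filter /R (count_permutations_cons _ (filter_uniq _ s_uniq)) //.
  by rewrite -size_eq0 -lt0n.
rewrite count_permutations_cons // big_distrl /= (eq_big_seq _ step) -big_distrl /=.
rewrite (bigID a) /= (eq_bigr (fun x => k * h x)) => [|x ->] //.
rewrite [X in _ + X](eq_bigr (fun=> R)) => [|x /negbTE ->] //.
rewrite -big_distrr /= sum_h big_const_seq iter_addn_0 /= (mulnC R) -mulnDl.
have -> : k + count (predC a) s = n.+1 by rewrite /k size_filter count_predC.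
by rewrite factS -mulnA mulnCA.
Qed.

End CountPermutations.

Lemma pick_subpred (T : finType) (P Q : pred T) (x : T) :
  subpred Q P -> [pick y | P y] = Some x -> Q x -> [pick y | Q y] = Some x.
Proof.
move=> QP; rewrite /pick /enum_mem; elim: (Finite.enum T) => //= y l IHl.
rewrite !unfold_in /=; case Py: (P y) => /=; first by move=> [<-] ->.
by rewrite (contraFF (QP y) Py).
Qed.

Lemma set_in_filter (T : finType) (S : {set T}) (l : seq T) :
  [set x in filter (mem S) l] = S :&: [set x in l].
Proof. by apply/setP => x; rewrite !inE mem_filter. Qed.

Section Probability.
Variables (T : finType) (M : matroid T).

Lemma eq_Pr (P Q : pred (seq T)) : P =1 Q -> Pr M P = Pr M Q.
Proof. by move=> eqPQ; rewrite /Pr (eq_count eqPQ). Qed.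

Lemma Pr_le (P Q : pred (seq T)) :
  (forall t, t \in orderings M -> P t -> Q t) -> (Pr M P <= Pr M Q)%R.
Proof.
move=> PQ; rewrite /Pr ler_wpM2r ?invr_ge0 ?ler0n // ler_nat.
rewrite -(@eq_in_count _ (predI Q P)) ?sub_count // => [t /andP[] //|t tM /=].
by case Pt: (P t); rewrite ?andbF // (PQ t tM Pt).
Qed.

Lemma PrB (P Q : pred (seq T)) :
  subpred Q P -> (Pr M P - Pr M Q = Pr M (predD P Q))%R.
Proof.
move=> QP; apply/eqP; rewrite subr_eq /Pr -mulrDl -natrD; apply/eqP; congr (_%:R / _)%R.
elim: (orderings M) => //= t ts ->; rewrite addnACA; congr (_ + _).
by case Qt: (Q t); rewrite ?(QP _ Qt) ?addn0.
Qed.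

Lemma Pr_filter_restrict (S : {set T}) (Q : pred (seq T)) :
  Pr M (fun t => Q (filter (mem S) t)) = Pr (restrict M S) Q.
Proof.
have filter_enum : filter (mem S) (enum (ground M)) = enum (S :&: ground M).
  by rewrite /enum_mem -filter_predI; apply: eq_filter => x; rewrite !inE.
have := count_permutations_filter (mem S) Q (enum_uniq (mem (ground M))).
rewrite filter_enum /Pr /orderings /= !size_permutations ?enum_uniq // => eq_count.
apply/eqP; rewrite eqr_div ?pnatr_eq0 -?lt0n ?fact_gt0 // -!natrM eqr_nat.
by rewrite eq_count.
Qed.

Lemma ordering_set (t : seq T) : t \in orderings M -> [set x in t] = ground M.
Proof.
by rewrite mem_permutations => perm_t; apply/setP => x; rewrite inE (perm_mem perm_t) mem_enum.
Qed.

End Probability.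

Section FirstDependentPrefix.
Variables (T : finType) (M : matroid T).

Lemma first_dep_prefix_take (s : seq T) (j : nat) :
  ~~ indep M [set x in take j s] ->
  (forall k, k < j -> indep M [set x in take k s]) ->
  first_dep_prefix M s = [set x in take j s].
Proof.
move=> dep_j indep_lt.
have j_le : j <= size s.
  rewrite leqNgt; apply: contra dep_j => lt_sj.
  by rewrite take_oversize ?(ltnW lt_sj) // -{1}(take_size s) indep_lt.
rewrite /first_dep_prefix -(subnKC (leqW j_le)) iotaD find_cat size_iota.
have -> : has (fun k => ~~ indep M [set y in take k s]) (iota 0 j) = false.
  by apply/hasPn => k; rewrite mem_iota add0n => /indep_lt ->.
by rewrite subSn //= add0n dep_j addn0.
Qed.

Lemma first_dep_prefixP (s : seq T) :
  ~~ indep M [set x in s] ->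
  exists j, [/\ first_dep_prefix M s = [set x in take j s],
                ~~ indep M [set x in take j s]
              & forall k, k < j -> indep M [set x in take k s]].
Proof.
move=> dep_s.
have ex_dep : exists j, ~~ indep M [set x in take j s] by exists (size s); rewrite take_size.
case: (ex_minnP ex_dep) => j dep_j min_j; exists j.
have indep_lt k : k < j -> indep M [set x in take k s].
  by move=> lt_kj; apply: contraTT lt_kj => /min_j; rewrite -leqNgt.
by split=> //; apply: first_dep_prefix_take.
Qed.

End FirstDependentPrefix.

Section Restriction.
Variables (T : finType) (M : matroid T) (S : {set T}).

Lemma first_dep_prefix_restrict (s : seq T) (j : nat) :
  (forall k, k < j -> indep M [set x in take k s]) ->
  ~~ indep M [set x in filter (mem S) (take j s)] ->
  first_dep_prefix (restrict M S) (filter (mem S) s)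
  = [set x in filter (mem S) (take j s)].
Proof.
move=> indep_lt dep_jS; set sS := filter (mem S) s.
set m := size (filter (mem S) (take j s)).
have take_m : take m sS = filter (mem S) (take j s).
  by rewrite /sS -{1}(cat_take_drop j s) filter_cat take_size_cat.
rewrite -take_m; apply: first_dep_prefix_take => [|k lt_km].
  by rewrite take_m /= /restr_indep negb_and dep_jS.
have j_gt0 : 0 < j by rewrite lt0n; apply: contraTneq lt_km => j0; rewrite /m j0 take0.
set u := filter (mem S) (take j.-1 s).
have m_le : m <= (size u).+1.
  rewrite /m -(prednK j_gt0) -addn1 takeD filter_cat size_cat -/u -[(size u).+1]addn1 leq_add2l.
  by rewrite size_filter (leq_trans (count_size _ _)) // size_take_min geq_minl.
have take_k : take k sS = take k u.
  by rewrite /sS -{1}(cat_take_drop j.-1 s) filter_cat takel_cat // -ltnS (leq_trans lt_km).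
have sub_k : [set x in take k sS] \subset S :&: [set x in take j.-1 s].
  by rewrite -set_in_filter; apply/subsetP => x; rewrite take_k !inE => /mem_take.
apply/andP; split; last exact: subset_trans sub_k (subsetIl _ _).
apply: indep_hered (subset_trans sub_k (subsetIr _ _)) (indep_lt _ _).
by rewrite prednK // ltnS leqnn.
Qed.

Lemma circuit_restrict (C : {set T}) :
  C \subset S -> circuit (restrict M S) C = circuit M C.
Proof.
move=> sub_CS; rewrite /circuit /= /restr_indep sub_CS andbT; congr (_ && _).
apply: eq_forallb => D; case: (boolP (D \proper C)) => //= proper_DC.
by rewrite (subset_trans (proper_sub proper_DC) sub_CS) andbT.
Qed.

Lemma Cpi_restrict (s : seq T) :
  ~~ indep M [set x in s] -> Cpi M s \subset S -> Cpi M s != set0 ->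
  Cpi (restrict M S) (filter (mem S) s) = Cpi M s.
Proof.
move=> dep_s; rewrite /Cpi.
case E: [pick C | circuit M C && (C \subset first_dep_prefix M s)] => [C0|] /=;
  last by move=> _; rewrite eqxx.
move=> sub_C0S _; have [j [pre_j dep_j indep_lt]] := first_dep_prefixP dep_s.
have /andP[circ_C0 sub_C0j] : circuit M C0 && (C0 \subset first_dep_prefix M s).
  by move: E; case: pickP => // C PC [<-].
rewrite pre_j in sub_C0j.
have sub_C0jS : C0 \subset [set x in filter (mem S) (take j s)].
  by rewrite set_in_filter subsetI sub_C0S.
have dep_jS : ~~ indep M [set x in filter (mem S) (take j s)].
  by case/andP: circ_C0 => dep_C0 _; apply: contra dep_C0; apply: indep_hered.
rewrite (first_dep_prefix_restrict indep_lt dep_jS).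
(* Both picks scan the same enumeration and every candidate of the restricted
   pick is one of M's, so no uniqueness of circuits is needed. *)
suff -> : [pick C | circuit (restrict M S) C
                   && (C \subset [set x in filter (mem S) (take j s)])] = Some C0 by [].
apply: pick_subpred E _ => [C /andP[circ_C sub_Cj]|]; last first.
  by rewrite circuit_restrict // circ_C0.
move: sub_Cj; rewrite set_in_filter subsetI => /andP[sub_CS sub_Cj].
by rewrite -circuit_restrict // circ_C pre_j.
Qed.

End Restriction.

Theorem mainTheorem5 (T : finType) (M : matroid T) (S A : {set T}) :
  ~~ indep M (ground M) ->
  S \subset ground M -> ~~ indep M S -> A \subset S ->
  (massq M S - massq M (S :\: A))%R
    = Pr M (fun s => (Cpi M s \subset S) && (Cpi M s :&: A != set0))
  /\ (Pr M (fun s => (Cpi M s \subset S) && (Cpi M s :&: A != set0))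
       <= hitp (restrict M S) A)%R.
Proof.
move=> dep_E _ _ _; split.
  rewrite /massq PrB => [|t /subset_trans]; last by apply; apply: subsetDl.
  by apply: eq_Pr => t /=; rewrite subsetD setI_eq0 andbC; case: (_ \subset S).
rewrite /hitp -Pr_filter_restrict; apply: Pr_le => t t_ord /andP[sub_S meet_A].
have nonempty : Cpi M t != set0 by apply: contraNneq meet_A => ->; rewrite set0I.
by rewrite Cpi_restrict // (ordering_set t_ord).
Qed.
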